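(* For all constants $c_1,c_2>0$ and every constant $\epsilon>0$ there is a constant $K$ such that the following holds for all $n\ge 3$: every $B_2$-circuit with $n$ inputs, size at most $c_1 n$ and depth at most $c_2\log n$ computing a function $f:\{0,1\}^n\to\{0,1\}$ can be converted into a nondeterministic formula computing $f$ with $n$ actual inputs, at most $K n/\log\log n$ guess inputs, and size at most $K n^{1+\epsilon}$.
   Context: A circuit is a directed acyclic graph whose in-degree-0 nodes (inputs) are each labeled by a variable or a constant $0$ or $1$, whose other nodes (gates) are each labeled by a Boolean function, with one designated output node. $B_2$ is the set of all Boolean functions $\{0,1\}^2\to\{0,1\}$; a $B_2$-circuit is a circuit whose gates have fan-in $2$ and are labeled by functions in $B_2$. A formula is a circuit in which every node has fan-out at most $1$ (here with fan-in-$2$ gates labeled by functions in $B_2$). A nondeterministic circuit (resp. formula) has actual inputs $x\in\{0,1\}^n$ and guess inputs $y\in\{0,1\}^m$ and computes $f$ where $f(x)=1$ iff there exists $y$ making the output $1$. Size is the number of gates; depth is the length of the longest path from an input to the output. *)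

From Stdlib Require Import Reals List Arith Lia.
Import ListNotations.
Open Scope R_scope.

Definition B2 := bool -> bool -> bool.

Inductive leaf : Type :=
| LVar (i : nat)
| LConst (b : bool).

(** ** B_2-circuits, as straight-line programs (topologically ordered gates). *)

Inductive node : Type :=
| NIn (l : leaf)
| NGate (k : nat).

Record circuit : Type := Circuit {
  gates : list (B2 * node * node);
  output : node
}.

(** Well-formedness for a circuit with n inputs x_0..x_{n-1}: every variable
    index is < n, and gate k only reads input nodes and gates j < k (acyclicity). *)
Definition node_ok (n bound : nat) (v : node) : Prop :=
  match v with
  | NIn (LVar i) => (i < n)%nat
  | NIn (LConst _) => True
  | NGate j => (j < bound)%nat
  end.

Definition circuit_wf (n : nat) (C : circuit) : Prop :=
  (forall k g a b, nth_error (gates C) k = Some (g, a, b) ->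
     node_ok n k a /\ node_ok n k b) /\
  node_ok n (length (gates C)) (output C).

Definition leaf_val (x : nat -> bool) (l : leaf) : bool :=
  match l with LVar i => x i | LConst b => b end.

Definition node_val (x : nat -> bool) (vals : list bool) (v : node) : bool :=
  match v with
  | NIn l => leaf_val x l
  | NGate k => nth k vals false
  end.

Fixpoint gate_vals_aux (x : nat -> bool) (gs : list (B2 * node * node))
  (acc : list bool) : list bool :=
  match gs with
  | [] => acc
  | (g, a, b) :: gs' =>
      gate_vals_aux x gs' (acc ++ [g (node_val x acc a) (node_val x acc b)])
  end.

Definition circuit_eval (C : circuit) (x : nat -> bool) : bool :=
  node_val x (gate_vals_aux x (gates C) []) (output C).

Definition node_depth (ds : list nat) (v : node) : nat :=
  match v with
  | NIn _ => 0%nat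
  | NGate k => nth k ds 0%nat
  end.

Fixpoint gate_depths_aux (gs : list (B2 * node * node)) (acc : list nat) : list nat :=
  match gs with
  | [] => acc
  | (_, a, b) :: gs' =>
      gate_depths_aux gs' (acc ++ [S (Nat.max (node_depth acc a) (node_depth acc b))])
  end.

Definition circuit_depth (C : circuit) : nat :=
  node_depth (gate_depths_aux (gates C) []) (output C).

Definition circuit_size (C : circuit) : nat := length (gates C).

(** C computes f : {0,1}^n -> {0,1} (inputs encoded as nat -> bool; only the
    first n coordinates matter for a well-formed circuit with n inputs). *)
Definition circuit_computes (C : circuit) (f : (nat -> bool) -> bool) : Prop :=
  forall x, circuit_eval C x = f x.

(** ** Nondeterministic formulas (fan-out <= 1, i.e. trees, fan-in-2 B_2 gates). *)

Inductive nleaf : Type :=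
| Actual (i : nat)
| Guess (j : nat)
| NConst (b : bool).

Inductive formula : Type :=
| FLeaf (l : nleaf)
| FGate (g : B2) (a b : formula).

Fixpoint formula_size (F : formula) : nat :=
  match F with
  | FLeaf _ => 0%nat
  | FGate _ a b => S (formula_size a + formula_size b)
  end.

Fixpoint formula_eval (F : formula) (x y : nat -> bool) : bool :=
  match F with
  | FLeaf (Actual i) => x i
  | FLeaf (Guess j) => y j
  | FLeaf (NConst b) => b
  | FGate g a b => g (formula_eval a x y) (formula_eval b x y)
  end.

Fixpoint formula_vars_ok (n m : nat) (F : formula) : Prop :=
  match F with
  | FLeaf (Actual i) => (i < n)%nat
  | FLeaf (Guess j) => (j < m)%nat
  | FLeaf (NConst _) => True
  | FGate _ a b => formula_vars_ok n m a /\ formula_vars_ok n m b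
  end.

(** F nondeterministically computes f: f(x)=1 iff some guess y makes F output 1.
    (Guess inputs beyond y_{m-1} are never read when formula_vars_ok n m F.) *)
Definition nd_formula_computes (F : formula) (f : (nat -> bool) -> bool) : Prop :=
  forall x, f x = true <-> exists y, formula_eval F x y = true.

Definition log2 (x : R) : R := ln x / ln 2.

From Stdlib Require Import Reals List Arith Lia Lra Bool.
Import ListNotations.

(* Fix r with 2^r >= 2 c2 / eps. A wire u -> k crosses at scale i when, going from
   depth(u) to depth(k), the depth passes a multiple of 2^(r i) but no multiple of
   2^(r (i+1)); each wire crosses at most one scale, so among B ~ log log n / r scales
   some scale is crossed by at most 2|C|/B wires. Guess the values of their sources.
   Along every other wire the compressed depth  d mod 2^(r i) + 2^(r i) * (d / 2^(r (i+1)))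
   strictly increases and stays below 2^(r i) + depth(C) / 2^r <= 1 + eps log n, so every gate
   unfolds into a formula of size O(n^eps) down to guessed gates.  The nondeterministic
   formula checks each guess against its gate and then evaluates the output. *)

Open Scope nat_scope.

Notation gate := (B2 * node * node)%type.

Section GateScan.
Variables (A : Type) (step : gate -> list A -> A).

Fixpoint gate_scan (gs : list gate) (acc : list A) : list A :=
  match gs with [] => acc | e :: gs' => gate_scan gs' (acc ++ [step e acc]) end.

Lemma gate_scan_prefix gs acc : exists t, gate_scan gs acc = acc ++ t.
Proof.
  revert acc; induction gs as [|e gs IH]; intros acc; simpl.
  - exists []; now rewrite app_nil_r.
  - destruct (IH (acc ++ [step e acc])) as [t ->].
    exists (step e acc :: t); now rewrite <- app_assoc.
Qed.

Lemma nth_error_gate_scan gs acc k e : nth_error gs k = Some e ->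
  nth_error (gate_scan gs acc) (length acc + k)
  = Some (step e (firstn (length acc + k) (gate_scan gs acc))).
Proof.
  revert acc k; induction gs as [|e0 gs IH]; intros acc k Hk; [destruct k; discriminate|].
  destruct k as [|k]; simpl in Hk.
  - injection Hk as ->; simpl.
    destruct (gate_scan_prefix gs (acc ++ [step e acc])) as [t ->].
    rewrite Nat.add_0_r, <- app_assoc, nth_error_app2, Nat.sub_diag by lia; simpl.
    now rewrite firstn_app, Nat.sub_diag, firstn_all, app_nil_r.
  - simpl; specialize (IH (acc ++ [step e0 acc]) k Hk).
    rewrite length_app in IH; simpl in IH.
    now replace (length acc + S k) with (length acc + 1 + k) by lia.
Qed.

End GateScan.
Arguments gate_scan {A}.

Definition value_step (x : nat -> bool) (e : gate) (acc : list bool) : bool :=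
  let '(g, a, b) := e in g (node_val x acc a) (node_val x acc b).

Definition depth_step (e : gate) (acc : list nat) : nat :=
  let '(_, a, b) := e in S (Nat.max (node_depth acc a) (node_depth acc b)).

Lemma gate_vals_aux_scan x gs acc : gate_vals_aux x gs acc = gate_scan (value_step x) gs acc.
Proof. revert acc; induction gs as [|[[g a] b] gs IH]; intros; simpl; auto. Qed.

Lemma gate_depths_aux_scan gs acc : gate_depths_aux gs acc = gate_scan depth_step gs acc.
Proof. revert acc; induction gs as [|[[g a] b] gs IH]; intros; simpl; auto. Qed.

Definition gate_values (x : nat -> bool) (gs : list gate) : list bool := gate_vals_aux x gs [].
Definition gate_depths (gs : list gate) : list nat := gate_depths_aux gs [].
Definition gate_depth (gs : list gate) (k : nat) : nat := nth k (gate_depths gs) 0.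

Lemma node_val_firstn n x V k a :
  node_ok n k a -> node_val x (firstn k V) a = node_val x V a.
Proof.
  destruct a as [l|j]; simpl; auto; intros H.
  rewrite nth_firstn; apply Nat.ltb_lt in H; now rewrite H.
Qed.

Lemma node_depth_firstn n V k a :
  node_ok n k a -> node_depth (firstn k V) a = node_depth V a.
Proof.
  destruct a as [l|j]; simpl; auto; intros H.
  rewrite nth_firstn; apply Nat.ltb_lt in H; now rewrite H.
Qed.

Lemma gate_value_eq n C x k g a b :
  circuit_wf n C -> nth_error (gates C) k = Some (g, a, b) ->
  nth k (gate_values x (gates C)) false
  = g (node_val x (gate_values x (gates C)) a) (node_val x (gate_values x (gates C)) b).
Proof.
  intros [Hw _] Hk; destruct (Hw _ _ _ _ Hk) as [Ha Hb].
  pose proof (nth_error_gate_scan _ (value_step x) (gates C) [] k _ Hk) as H; simpl in H.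
  unfold gate_values; rewrite gate_vals_aux_scan.
  rewrite (nth_error_nth _ _ false H); simpl.
  now rewrite (node_val_firstn _ _ _ _ _ Ha), (node_val_firstn _ _ _ _ _ Hb).
Qed.

Lemma gate_depth_eq n C k g a b :
  circuit_wf n C -> nth_error (gates C) k = Some (g, a, b) ->
  gate_depth (gates C) k
  = S (Nat.max (node_depth (gate_depths (gates C)) a) (node_depth (gate_depths (gates C)) b)).
Proof.
  intros [Hw _] Hk; destruct (Hw _ _ _ _ Hk) as [Ha Hb].
  pose proof (nth_error_gate_scan _ depth_step (gates C) [] k _ Hk) as H; simpl in H.
  unfold gate_depth, gate_depths; rewrite gate_depths_aux_scan.
  rewrite (nth_error_nth _ _ 0 H); simpl.
  now rewrite (node_depth_firstn _ _ _ _ Ha), (node_depth_firstn _ _ _ _ Hb).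
Qed.

Definition crosses_scale (j w du dv : nat) : bool :=
  (du / 2^j <? dv / 2^j) && (du / 2^(j + w) =? dv / 2^(j + w)).

Definition compress_depth (j w d : nat) : nat := d mod 2^j + 2^j * (d / 2^(j + w)).

Lemma compress_depth_lt j w du dv :
  du < dv -> crosses_scale j w du dv = false -> compress_depth j w du < compress_depth j w dv.
Proof.
  intros Hlt Hcross; unfold crosses_scale in Hcross; unfold compress_depth.
  pose proof (Nat.pow_nonzero 2 j ltac:(lia)) as Hj.
  assert (Hle1 : du / 2^(j + w) <= dv / 2^(j + w)) by (apply Nat.Div0.div_le_mono; lia).
  assert (Hle2 : du / 2^j <= dv / 2^j) by (apply Nat.Div0.div_le_mono; lia).
  pose proof (Nat.mod_upper_bound du (2^j) Hj).
  pose proof (Nat.mod_upper_bound dv (2^j) Hj).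
  destruct (Nat.eq_dec (du / 2^(j + w)) (dv / 2^(j + w))) as [He|Hne].
  - rewrite He; apply Nat.eqb_eq in He.
    rewrite He, andb_true_r in Hcross; apply Nat.ltb_ge in Hcross.
    pose proof (Nat.div_mod_eq du (2^j)); pose proof (Nat.div_mod_eq dv (2^j)); nia.
  - nia.
Qed.

Lemma compress_depth_bound j w d : compress_depth j w d < 2^j + d / 2^w.
Proof.
  unfold compress_depth.
  pose proof (Nat.mod_upper_bound d (2^j) (Nat.pow_nonzero 2 j ltac:(lia))).
  rewrite Nat.pow_add_r, (Nat.mul_comm (2^j) (2^w)), <- Nat.Div0.div_div.
  pose proof (Nat.Div0.mul_div_le (d / 2^w) (2^j)); lia.
Qed.

Lemma crosses_scale_unique r i i' du dv :
  i < i' -> crosses_scale (r * i) r du dv = true -> crosses_scale (r * i') r du dv = false.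
Proof.
  intros Hi H; unfold crosses_scale in *.
  apply andb_true_iff in H as [_ H]; apply Nat.eqb_eq in H.
  replace (r * i') with ((r * i + r) + r * (i' - i - 1)) by nia.
  now rewrite Nat.pow_add_r, <- !Nat.Div0.div_div, H, Nat.ltb_irrefl.
Qed.

Fixpoint sum_below (B : nat) (c : nat -> nat) : nat :=
  match B with 0 => 0 | S B' => sum_below B' c + c B' end.

Lemma sum_below_zero B c : (forall i, i < B -> c i = 0) -> sum_below B c = 0.
Proof. induction B; simpl; intros H; auto. rewrite IHB, H; auto. Qed.

Lemma sum_below_add B a b : sum_below B (fun i => a i + b i) = sum_below B a + sum_below B b.
Proof. induction B; simpl; lia. Qed.

Lemma sum_below_ge B a c : (forall i, i < B -> a <= c i) -> B * a <= sum_below B c.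
Proof. induction B; simpl; intros H; auto. pose proof (H B (le_n _)). pose proof (IHB ltac:(auto)). lia. Qed.

Lemma sum_below_indicator_le1 {T} (p : nat -> T -> bool) B e :
  (forall i i', i < i' -> i' < B -> p i e = true -> p i' e = false) ->
  sum_below B (fun i => if p i e then 1 else 0) <= 1.
Proof.
  induction B; simpl; intros H; auto.
  destruct (p B e) eqn:E.
  - rewrite sum_below_zero; auto. intros i Hi.
    destruct (p i e) eqn:E2; auto.
    now rewrite (H i B Hi (le_n _) E2) in E.
  - enough (sum_below B (fun i => if p i e then 1 else 0) <= 1) by lia.
    apply IHB; intros; apply (H i i'); auto.
Qed.

Lemma sum_below_filter_disjoint {T} (p : nat -> T -> bool) B E :
  (forall i i' e, i < i' -> i' < B -> p i e = true -> p i' e = false) ->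
  sum_below B (fun i => length (filter (p i) E)) <= length E.
Proof.
  intros H; induction E as [|e E IH]; simpl.
  - now rewrite sum_below_zero.
  - assert (Heq : sum_below B (fun i => length (if p i e then e :: filter (p i) E else filter (p i) E))
                = sum_below B (fun i => (if p i e then 1 else 0) + length (filter (p i) E))).
    { clear. induction B; simpl; auto. rewrite IHB. destruct (p B e); simpl; lia. }
    rewrite Heq, sum_below_add.
    pose proof (sum_below_indicator_le1 p B e (fun i i' => H i i' e)); lia.
Qed.

Lemma exists_argmin_below B (c : nat -> nat) :
  1 <= B -> exists i, i < B /\ forall i', i' < B -> c i <= c i'.
Proof.
  induction B as [|B IH]; intros HB; [lia|].
  destruct (Nat.eq_dec B 0) as [->|HB0]; [exists 0; split; [lia|intros i' Hi'; replace i' with 0 by lia; lia]|].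
  destruct (IH ltac:(lia)) as [i [Hi Hmin]].
  destruct (Nat.le_gt_cases (c i) (c B)) as [Hle|Hgt].
  - exists i; split; [lia|]; intros i' Hi'.
    destruct (Nat.eq_dec i' B) as [->|]; [lia|apply Hmin; lia].
  - exists B; split; [lia|]; intros i' Hi'.
    destruct (Nat.eq_dec i' B) as [->|]; [lia|pose proof (Hmin i'); lia].
Qed.

Lemma sum_below_pigeonhole B c L :
  1 <= B -> sum_below B c <= L -> exists i, i < B /\ B * c i <= L.
Proof.
  intros HB Hs; destruct (exists_argmin_below B c HB) as [i [Hi Hmin]].
  exists i; split; auto; pose proof (sum_below_ge B (c i) c Hmin); lia.
Qed.

Lemma filter_existsb_length (l S : list nat) :
  NoDup l -> length (filter (fun u => existsb (Nat.eqb u) S) l) <= length S.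
Proof.
  intros Hl; apply NoDup_incl_length; [now apply NoDup_filter|].
  intros u Hu; apply filter_In in Hu as [_ Hu].
  apply existsb_exists in Hu as [s [Hs Hus]]; now apply Nat.eqb_eq in Hus as ->.
Qed.

Definition default_gate : gate := (fun _ _ => false, NIn (LConst false), NIn (LConst false)).

Lemma nth_gate gs k : k < length gs ->
  exists g a b, nth_error gs k = Some (g, a, b) /\ nth k gs default_gate = (g, a, b).
Proof.
  intros Hk; destruct (nth_error gs k) as [[[g a] b]|] eqn:E.
  - exists g, a, b; split; auto; now apply nth_error_nth.
  - apply nth_error_None in E; lia.
Qed.

Lemma node_ok_mono n k k' v : k <= k' -> node_ok n k v -> node_ok n k' v.
Proof. destruct v as [[i|b]|j]; simpl; auto; lia. Qed.

Fixpoint unfold_node (gs : list gate) (cut : nat -> bool) (idx : nat -> nat)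
    (fuel : nat) (v : node) {struct fuel} : formula :=
  match v with
  | NIn (LVar i) => FLeaf (Actual i)
  | NIn (LConst b) => FLeaf (NConst b)
  | NGate k =>
      if cut k then FLeaf (Guess (idx k)) else
      match fuel with
      | 0 => FLeaf (NConst false)
      | S fuel' =>
          let '(g, a, b) := nth k gs default_gate in
          FGate g (unfold_node gs cut idx fuel' a) (unfold_node gs cut idx fuel' b)
      end
  end.

Lemma unfold_node_size gs cut idx fuel v :
  formula_size (unfold_node gs cut idx fuel v) <= 2^fuel - 1.
Proof.
  revert v; induction fuel as [|fuel IH]; intros v; destruct v as [[i|b]|k]; simpl; try lia;
    destruct (cut k); simpl; try lia.
  destruct (nth k gs default_gate) as [[g a] b]; simpl.
  pose proof (IH a); pose proof (IH b); pose proof (Nat.pow_nonzero 2 fuel ltac:(lia)); lia.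
Qed.

Lemma unfold_node_vars n m C cut idx fuel v :
  circuit_wf n C ->
  (forall k, k < length (gates C) -> cut k = true -> idx k < m) ->
  node_ok n (length (gates C)) v -> formula_vars_ok n m (unfold_node (gates C) cut idx fuel v).
Proof.
  intros Hwf Hidx; revert v; induction fuel as [|fuel IH]; intros v Hv;
    destruct v as [[i|b]|k]; simpl in *; auto; destruct (cut k) eqn:Ec; simpl; auto.
  destruct (nth_gate (gates C) k Hv) as (g & a & b & Hn & ->); simpl.
  destruct (proj1 Hwf _ _ _ _ Hn).
  split; apply IH; apply (node_ok_mono n k); auto; lia.
Qed.

(* [rank] strictly increases along every uncut wire into a gate of depth at most [D],
   so [rank k] levels of unfolding suffice below gate [k]. *)
Lemma unfold_node_eval n C x y cut idx (rank : nat -> nat) D U :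
  circuit_wf n C ->
  (forall k g a b j, nth_error (gates C) k = Some (g, a, b) -> (a = NGate j \/ b = NGate j) ->
     gate_depth (gates C) k <= D -> cut j = false -> rank j < rank k) ->
  (forall u, u < U -> cut u = true -> y (idx u) = nth u (gate_values x (gates C)) false) ->
  forall fuel v,
  (forall k, v = NGate k -> k < U /\ k < length (gates C) /\ gate_depth (gates C) k <= D /\
                           (cut k = false -> rank k < fuel)) ->
  formula_eval (unfold_node (gates C) cut idx fuel v) x y = node_val x (gate_values x (gates C)) v.
Proof.
  intros Hwf Hrank Hy fuel; induction fuel as [|fuel IH]; intros v Hv;
    destruct v as [[i|b]|k]; simpl; auto;
    destruct (Hv k eq_refl) as (HU & Hk & HD & Hr);
    destruct (cut k) eqn:Ec; simpl; auto; try (specialize (Hr eq_refl); lia).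
  destruct (nth_gate (gates C) k Hk) as (g & a & b & Hn & ->); simpl.
  rewrite (gate_value_eq n C x k g a b Hwf Hn).
  pose proof (gate_depth_eq n C k g a b Hwf Hn) as Hd.
  destruct (proj1 Hwf _ _ _ _ Hn) as [Ha Hb]; specialize (Hr eq_refl).
  rewrite !IH; auto.
  all: intros j ->; simpl in *; fold (gate_depth (gates C) j) in Hd;
    repeat split; try lia; intros Hcj; assert (rank j < rank k) by (eapply Hrank; eauto); lia.
Qed.

Definition wires (gs : list gate) : list (node * nat) :=
  flat_map (fun k => let '(_, a, b) := nth k gs default_gate in [(a, k); (b, k)])
           (seq 0 (length gs)).

Lemma wires_length gs : length (wires gs) = 2 * length gs.
Proof.
  unfold wires; rewrite <- (length_seq (length gs) 0) at 2.
  induction (seq 0 (length gs)) as [|z l IH]; simpl; auto.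
  destruct (nth z gs default_gate) as [[g a] b]; simpl; lia.
Qed.

Lemma in_wires gs k g a b :
  nth_error gs k = Some (g, a, b) -> In (a, k) (wires gs) /\ In (b, k) (wires gs).
Proof.
  intros H; assert (Hk : k < length gs) by (apply nth_error_Some; congruence).
  apply (nth_error_nth _ _ default_gate) in H.
  unfold wires; split; apply in_flat_map; exists k; rewrite in_seq, H; simpl; auto with arith.
Qed.

Lemma in_wires_inv gs v k :
  In (v, k) (wires gs) -> exists g a b, nth_error gs k = Some (g, a, b) /\ (v = a \/ v = b).
Proof.
  unfold wires; intros H; apply in_flat_map in H as [k' [Hk' Hin]]; apply in_seq in Hk'.
  destruct (nth_gate gs k' ltac:(lia)) as (g & a & b & Hn & Hn'); rewrite Hn' in Hin.
  destruct Hin as [E|[E|[]]]; injection E as E1 E2; subst k'; exists g, a, b; auto.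
Qed.

Definition crossing_wire gs j w D (e : node * nat) : bool :=
  match fst e with
  | NGate u => crosses_scale j w (gate_depth gs u) (gate_depth gs (snd e))
               && (gate_depth gs (snd e) <=? D)
  | NIn _ => false
  end.

Definition wire_source (e : node * nat) : nat :=
  match fst e with NGate u => u | NIn _ => 0 end.

Definition cut_gate gs j w D (u : nat) : bool :=
  existsb (Nat.eqb u) (map wire_source (filter (crossing_wire gs j w D) (wires gs))).

Lemma cut_gateP gs j w D u :
  cut_gate gs j w D u = true <->
  exists k, In (NGate u, k) (wires gs) /\ crossing_wire gs j w D (NGate u, k) = true.
Proof.
  unfold cut_gate; rewrite existsb_exists; split.
  - intros [z [Hz Hu]]; apply Nat.eqb_eq in Hu as <-.
    apply in_map_iff in Hz as [[v k] [Hs Hin]]; apply filter_In in Hin as [Hin Hg].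
    destruct v as [l|u']; simpl in Hg, Hs; [discriminate|subst; eauto].
  - intros [k [Hin Hg]]; exists u; split; [|apply Nat.eqb_refl].
    apply in_map_iff; exists (NGate u, k); split; auto; apply filter_In; auto.
Qed.

Definition guess_index (cut : nat -> bool) (u : nat) : nat := length (filter cut (seq 0 u)).

Lemma filter_seq_split (cut : nat -> bool) u s : u < s -> cut u = true ->
  filter cut (seq 0 s) = filter cut (seq 0 u) ++ u :: filter cut (seq (S u) (s - S u)).
Proof.
  intros Hu Hc; replace s with (u + (1 + (s - S u))) at 1 by lia.
  rewrite seq_app, filter_app; simpl; now rewrite Hc.
Qed.

Definition and_chain (L : list nat) (check : nat -> formula) (o : formula) : formula :=
  fold_right (fun u acc => FGate andb (check u) acc) o L.

Lemma and_chain_eval L check o x y :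
  formula_eval (and_chain L check o) x y = true <->
  (forall u, In u L -> formula_eval (check u) x y = true) /\ formula_eval o x y = true.
Proof.
  induction L as [|u L IH]; simpl; [firstorder|].
  rewrite andb_true_iff, IH; split.
  - intros [H1 [H2 H3]]; split; auto; intros v [<-|Hv]; auto.
  - intros [H1 H2]; auto.
Qed.

Lemma and_chain_size L check o M :
  (forall u, In u L -> formula_size (check u) <= M) ->
  formula_size (and_chain L check o) <= length L * (M + 1) + formula_size o.
Proof.
  induction L as [|u L IH]; simpl; intros H; auto.
  pose proof (H u (or_introl eq_refl)); specialize (IH (fun v Hv => H v (or_intror Hv))); lia.
Qed.

Lemma and_chain_vars n m L check o :
  (forall u, In u L -> formula_vars_ok n m (check u)) -> formula_vars_ok n m o ->
  formula_vars_ok n m (and_chain L check o).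
Proof. induction L; simpl; intros H Ho; auto. Qed.

Section CutFormula.
Variables (n : nat) (C : circuit) (j w D : nat).
Hypothesis HC : circuit_wf n C.

Local Notation gs := (gates C).
Local Notation cut := (cut_gate (gates C) j w D).
Local Notation idx := (guess_index (cut_gate (gates C) j w D)).
Local Notation rank u := (compress_depth j w (gate_depth (gates C) u)).

Definition cut_gates : list nat := filter cut (seq 0 (length gs)).

Definition cut_check (u : nat) : formula :=
  let '(g, a, b) := nth u gs default_gate in
  FGate Bool.eqb (FLeaf (Guess (idx u)))
    (FGate g (unfold_node gs cut idx (rank u) a) (unfold_node gs cut idx (rank u) b)).

Definition output_formula : formula :=
  unfold_node gs cut idx (S (compress_depth j w (circuit_depth C))) (output C).

Definition cut_formula : formula := and_chain cut_gates cut_check output_formula.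

Definition correct_guesses (x y : nat -> bool) (U : nat) : Prop :=
  forall u, u < U -> cut u = true -> y (idx u) = nth u (gate_values x gs) false.

Lemma cut_gate_props u : cut u = true -> u < length gs /\ gate_depth gs u <= D.
Proof.
  intros Hc; apply cut_gateP in Hc as [k [Hin Hg]].
  destruct (in_wires_inv _ _ _ Hin) as (g & a & b & Hn & Hab).
  assert (Hk : k < length gs) by (apply nth_error_Some; congruence).
  pose proof (gate_depth_eq n C k g a b HC Hn) as Hd.
  destruct (proj1 HC _ _ _ _ Hn) as [Ha Hb].
  unfold crossing_wire in Hg; simpl in Hg; apply andb_true_iff in Hg as [_ Hg].
  apply Nat.leb_le in Hg.
  destruct Hab; subst; simpl in *; fold (gate_depth gs u) in Hd; lia.
Qed.

Lemma rank_increases k g a b u :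
  nth_error gs k = Some (g, a, b) -> (a = NGate u \/ b = NGate u) ->
  gate_depth gs k <= D -> cut u = false -> rank u < rank k.
Proof.
  intros Hn Hab HD Hc.
  destruct (in_wires _ _ _ _ _ Hn) as [Ea Eb].
  assert (Ein : In (NGate u, k) (wires gs)) by (destruct Hab; subst; auto).
  assert (Hg : crossing_wire gs j w D (NGate u, k) = false).
  { destruct (crossing_wire gs j w D (NGate u, k)) eqn:E; auto.
    rewrite (proj2 (cut_gateP gs j w D u) (ex_intro _ k (conj Ein E))) in Hc; discriminate. }
  unfold crossing_wire in Hg; simpl in Hg; apply Nat.leb_le in HD.
  rewrite HD, andb_true_r in Hg.
  apply compress_depth_lt; auto.
  pose proof (gate_depth_eq n C k g a b HC Hn) as Hd.
  destruct Hab; subst; simpl in Hd; fold (gate_depth gs u) in Hd; lia.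
Qed.

Lemma guess_index_lt u : u < length gs -> cut u = true -> idx u < length cut_gates.
Proof.
  intros Hu Hc; unfold cut_gates, guess_index.
  rewrite (filter_seq_split _ u _ Hu Hc), length_app; simpl; lia.
Qed.

Lemma cut_formula_vars : formula_vars_ok n (length cut_gates) cut_formula.
Proof.
  destruct HC as [Hw Ho].
  assert (Hidx : forall k, k < length gs -> cut k = true -> idx k < length cut_gates)
    by exact guess_index_lt.
  apply and_chain_vars; [|now apply unfold_node_vars].
  intros u Hu; apply filter_In in Hu as [Hu Hc]; apply in_seq in Hu.
  unfold cut_check; destruct (nth_gate gs u ltac:(lia)) as (g & a & b & Hn & ->).
  destruct (Hw _ _ _ _ Hn) as [Ha Hb]; simpl.
  split; [apply Hidx; auto; lia|].
  split; apply unfold_node_vars; auto; apply (node_ok_mono n u); auto; lia.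
Qed.

Lemma cut_check_eval x y u :
  u < length gs -> cut u = true -> correct_guesses x y u ->
  formula_eval (cut_check u) x y = Bool.eqb (y (idx u)) (nth u (gate_values x gs) false).
Proof.
  intros Hu Hc Hy; unfold cut_check.
  destruct (nth_gate gs u Hu) as (g & a & b & Hn & ->); simpl.
  rewrite (gate_value_eq n C x u g a b HC Hn).
  destruct (proj1 HC _ _ _ _ Hn) as [Ha Hb].
  pose proof (gate_depth_eq n C u g a b HC Hn) as Hd.
  destruct (cut_gate_props u Hc) as [_ HDu].
  rewrite !(unfold_node_eval n C x y cut idx (fun k => rank k) D u HC rank_increases Hy);
    auto.
  all: intros k ->; simpl in *; fold (gate_depth gs k) in Hd; repeat split; try lia;
    intros Hck; eapply rank_increases; eauto.
Qed.

Lemma output_formula_eval x y :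
  circuit_depth C <= D -> correct_guesses x y (length gs) ->
  formula_eval output_formula x y = circuit_eval C x.
Proof.
  intros HD Hy; unfold output_formula, circuit_eval.
  apply (unfold_node_eval n C x y cut idx (fun k => rank k) D (length gs) HC rank_increases Hy).
  intros k Hk; pose proof (proj2 HC) as Ho; unfold circuit_depth in HD |- *.
  rewrite Hk in Ho, HD |- *; change (node_depth _ (NGate k)) with (gate_depth gs k) in *.
  repeat split; auto; lia.
Qed.

Lemma correct_guesses_exist x : exists y, correct_guesses x y (length gs).
Proof.
  exists (fun i => nth i (map (fun u => nth u (gate_values x gs) false) cut_gates) false).
  intros u Hu Hc; unfold cut_gates, guess_index.
  rewrite (filter_seq_split _ u _ Hu Hc), map_app, app_nth2; rewrite length_map; auto.
  now rewrite Nat.sub_diag.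
Qed.

Lemma cut_formula_guesses_correct x y :
  (forall u, In u cut_gates -> formula_eval (cut_check u) x y = true) ->
  correct_guesses x y (length gs).
Proof.
  intros Hch u; induction u as [u IH] using (well_founded_induction lt_wf); intros Hu Hc.
  assert (Hin : In u cut_gates) by (apply filter_In; split; auto; apply in_seq; lia).
  specialize (Hch u Hin); rewrite cut_check_eval in Hch; auto.
  - now apply eqb_prop in Hch.
  - intros v Hv Hcv; apply IH; auto; lia.
Qed.

Lemma cut_formula_computes f :
  circuit_depth C <= D -> circuit_computes C f -> nd_formula_computes cut_formula f.
Proof.
  intros HD Hcomp x; rewrite <- Hcomp; split.
  - intros Hf; destruct (correct_guesses_exist x) as [y Hy]; exists y.
    apply and_chain_eval; split; [|now rewrite output_formula_eval].
    intros u Hu; apply filter_In in Hu as [Hu Hc]; apply in_seq in Hu.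
    rewrite cut_check_eval; [|lia|auto|intros v Hv Hcv; apply Hy; auto; lia].
    rewrite (Hy u) by (auto; lia); apply eqb_reflx.
  - intros [y Hy]; apply and_chain_eval in Hy as [Hch Hout].
    now rewrite <- (output_formula_eval x y HD (cut_formula_guesses_correct x y Hch)).
Qed.

Lemma cut_formula_size :
  circuit_depth C <= D ->
  formula_size cut_formula <= (length cut_gates + 1) * (2 * 2^(2^j + D / 2^w) + 1).
Proof.
  intros HD.
  assert (Hrank : forall d, d <= D -> compress_depth j w d < 2^j + D / 2^w).
  { intros d Hd; pose proof (compress_depth_bound j w d).
    pose proof (Nat.Div0.div_le_mono d D (2^w) Hd); lia. }
  set (P := 2^j + D / 2^w) in *.
  eapply Nat.le_trans; [apply and_chain_size with (M := 2 * 2^P)|].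
  - intros u Hu; apply filter_In in Hu as [Hu Hc]; apply in_seq in Hu.
    unfold cut_check; destruct (nth_gate gs u ltac:(lia)) as (g & a & b & Hn & ->); simpl.
    pose proof (unfold_node_size gs cut idx (rank u) a).
    pose proof (unfold_node_size gs cut idx (rank u) b).
    pose proof (Hrank _ (proj2 (cut_gate_props u Hc))).
    pose proof (Nat.pow_le_mono_r 2 (rank u) P ltac:(lia) ltac:(lia)).
    pose proof (Nat.pow_nonzero 2 (rank u) ltac:(lia)); lia.
  - pose proof (unfold_node_size gs cut idx (S (compress_depth j w (circuit_depth C))) (output C)).
    pose proof (Nat.pow_le_mono_r 2 _ P ltac:(lia) (Hrank _ HD)).
    fold output_formula in *; rewrite Nat.pow_succ_r' in *; nia.
Qed.

Lemma cut_gates_length :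
  length cut_gates <= length (filter (crossing_wire gs j w D) (wires gs)).
Proof.
  unfold cut_gates, cut_gate.
  eapply Nat.le_trans; [apply filter_existsb_length, seq_NoDup|]; now rewrite length_map.
Qed.

End CutFormula.

Lemma nd_formula_few_guesses n C f r B D :
  circuit_wf n C -> circuit_computes C f -> circuit_depth C <= D -> 1 <= B ->
  exists m F, formula_vars_ok n m F /\ nd_formula_computes F f /\
    B * m <= 2 * circuit_size C /\
    formula_size F <= (m + 1) * (2 * 2^(2^(r * (B - 1)) + D / 2^r) + 1).
Proof.
  intros Hwf Hcomp HD HB.
  set (crossing i := length (filter (crossing_wire (gates C) (r * i) r D) (wires (gates C)))).
  assert (Hsum : sum_below B crossing <= 2 * circuit_size C).
  { unfold crossing, circuit_size; rewrite <- wires_length.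
    apply sum_below_filter_disjoint; intros i i' e Hii' _ H.
    unfold crossing_wire in *; destruct (fst e); auto.
    apply andb_true_iff in H as [H _]; now rewrite (crosses_scale_unique r i i' _ _ Hii' H). }
  destruct (sum_below_pigeonhole B crossing _ HB Hsum) as [i [Hi Hcount]].
  exists (length (cut_gates C (r * i) r D)), (cut_formula C (r * i) r D).
  pose proof (cut_gates_length C (r * i) r D) as Hcut.
  pose proof (cut_formula_size n C (r * i) r D Hwf HD).
  assert (2^(2^(r * i) + D / 2^r) <= 2^(2^(r * (B - 1)) + D / 2^r)).
  { apply Nat.pow_le_mono_r, Nat.add_le_mono_r, Nat.pow_le_mono_r, Nat.mul_le_mono_l; lia. }
  split; [|split; [|split]].
  - apply cut_formula_vars, Hwf.
  - now apply (cut_formula_computes n).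
  - eapply Nat.le_trans; [apply Nat.mul_le_mono_l, Hcut|exact Hcount].
  - nia.
Qed.

Open Scope R_scope.

Lemma INR_pow2 k : INR (2 ^ k) = Rpower 2 (INR k).
Proof. rewrite pow_INR, Rpower_pow by lra; now replace (INR 2) with 2 by (simpl; lra). Qed.

Lemma ln2_pos : 0 < ln 2.
Proof. rewrite <- ln_1; apply ln_increasing; lra. Qed.

Lemma Rpower_2_log2 x : 0 < x -> Rpower 2 (log2 x) = x.
Proof.
  intros Hx; unfold Rpower, log2; pose proof ln2_pos.
  replace (ln x / ln 2 * ln 2) with (ln x) by (field; lra); now apply exp_ln.
Qed.

Lemma log2_lt_of_lt_pow2 t k : 0 < t -> t < INR (2 ^ k) -> log2 t < INR k.
Proof.
  intros Ht Hk; pose proof ln2_pos.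
  apply ln_increasing in Hk; auto.
  rewrite INR_pow2 in Hk; unfold Rpower in Hk; rewrite ln_exp in Hk; unfold log2.
  apply Rmult_lt_reg_r with (ln 2); auto; field_simplify; lra.
Qed.

Lemma log2_INR_gt_1 n : (3 <= n)%nat -> 1 < log2 (INR n).
Proof.
  intros Hn; apply le_INR in Hn; pose proof ln2_pos.
  assert (ln 2 < ln (INR n)) by (apply ln_increasing; simpl in Hn; lra).
  unfold log2; apply Rmult_lt_reg_r with (ln 2); auto; field_simplify; lra.
Qed.

Lemma log2_pos x : 1 < x -> 0 < log2 x.
Proof.
  intros Hx; unfold log2; apply Rdiv_lt_0_compat; [|exact ln2_pos].
  rewrite <- ln_1; apply ln_increasing; lra.
Qed.

Lemma pow2_le_Rpower x e P :
  0 < x -> INR P <= 1 + e * log2 x -> INR (2 ^ P) <= 2 * Rpower x e.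
Proof.
  intros Hx HP; rewrite INR_pow2.
  apply Rle_trans with (Rpower 2 (1 + e * log2 x)); [apply Rle_Rpower; lra|].
  rewrite Rpower_plus, Rpower_1, (Rmult_comm e), <- Rpower_mult, Rpower_2_log2; lra.
Qed.

Lemma exists_scale_width c e :
  0 < c -> 0 < e -> exists r, (1 <= r)%nat /\ 2 * c <= e * INR (2 ^ r).
Proof.
  intros Hc He; destruct (INR_unbounded (2 * c / e)) as [N HN].
  exists (S N); split; [lia|].
  pose proof (Nat.pow_gt_lin_r 2 (S N) ltac:(lia)) as Hlt; apply lt_INR in Hlt.
  rewrite S_INR in Hlt.
  replace (2 * c) with (2 * c / e * e) by (field; lra).
  rewrite Rmult_comm; apply Rmult_le_compat_l; lra.
Qed.

(* B is one more than the largest b with 2^(r(b+1)) <= t, or 1 if there is none. *)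
Lemma exists_scale_count t r :
  (1 <= r)%nat -> 0 <= t ->
  exists B, (1 <= B)%nat /\ INR (2 ^ (r * (B - 1))) <= 1 + t / INR (2 ^ r) /\
            t < INR (2 ^ (r * (B + 1))).
Proof.
  intros Hr Ht.
  assert (Hq : 0 < INR (2 ^ r)) by (apply lt_0_INR, Nat.neq_0_lt_0, Nat.pow_nonzero; lia).
  assert (Hstep : forall k, t < INR (2 ^ (r * (k + 1))) ->
    exists B, (1 <= B)%nat /\ INR (2 ^ (r * (B - 1))) <= 1 + t / INR (2 ^ r) /\
              t < INR (2 ^ (r * (B + 1)))).
  { induction k as [|k IH]; intros Hk.
    - exists 1%nat; repeat split; [lia| |].
      + rewrite Nat.sub_diag, Nat.mul_0_r; simpl.
        assert (0 <= t / INR (2 ^ r)) by (apply Rmult_le_pos; [lra|apply Rlt_le, Rinv_0_lt_compat, Hq]); lra.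
      + apply Rlt_le_trans with (1 := Hk); apply le_INR, Nat.pow_le_mono_r; lia.
    - destruct (Rlt_le_dec t (INR (2 ^ (r * (k + 1))))) as [Hlt|Hge]; [now apply IH|].
      exists (S k); repeat split; [lia| |exact Hk].
      replace (r * (S k - 1))%nat with (r * k)%nat by lia.
      replace (r * (k + 1))%nat with (r * k + r)%nat in Hge by lia.
      rewrite Nat.pow_add_r, mult_INR in Hge.
      assert (INR (2 ^ (r * k)) <= t / INR (2 ^ r)).
      { apply Rmult_le_reg_r with (INR (2 ^ r)); auto; field_simplify; lra. }
      lra. }
  destruct (INR_unbounded t) as [N HN]; apply (Hstep N).
  apply Rlt_trans with (1 := HN); apply lt_INR.
  pose proof (Nat.pow_gt_lin_r 2 (r * (N + 1)) ltac:(lia)); nia.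
Qed.

Lemma scale_exponent_bound (r B D : nat) c eps lam :
  0 <= lam -> 2 * c <= eps * INR (2 ^ r) ->
  INR (2 ^ (r * (B - 1))) <= 1 + c * lam / INR (2 ^ r) -> INR D <= c * lam ->
  INR (2 ^ (r * (B - 1)) + D / 2 ^ r) <= 1 + eps * lam.
Proof.
  intros Hlam Hr HB HD.
  set (q := INR (2 ^ r)) in *.
  assert (Hq : 0 < q) by (apply lt_0_INR, Nat.neq_0_lt_0, Nat.pow_nonzero; lia).
  assert (Hdiv : INR (D / 2 ^ r) * q <= c * lam).
  { pose proof (Nat.Div0.mul_div_le D (2 ^ r)) as H; apply le_INR in H.
    rewrite mult_INR in H; fold q in H; lra. }
  assert (Hcq : 2 * (c * lam / q) <= eps * lam).
  { apply Rmult_le_reg_r with q; auto; field_simplify; nra. }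
  assert (INR (D / 2 ^ r) <= c * lam / q).
  { apply Rmult_le_reg_r with q; auto; field_simplify; lra. }
  rewrite plus_INR; lra.
Qed.

Lemma guesses_bound (n m B r s : nat) c1 c2 K :
  (3 <= n)%nat -> 0 < c1 -> 0 < c2 -> INR s <= c1 * INR n ->
  (B * m <= 2 * s)%nat -> (1 <= B)%nat ->
  c2 * log2 (INR n) < INR (2 ^ (r * (B + 1))) ->
  2 * c1 * (2 * INR r + Rabs (log2 c2)) <= K ->
  INR m <= K * INR n / log2 (log2 (INR n)).
Proof.
  intros Hn Hc1 Hc2 Hs HBm HB Hdepth HK.
  set (lam := log2 (INR n)) in *.
  assert (Hlam : 1 < lam) by now apply log2_INR_gt_1.
  assert (Hll : 0 < log2 lam) by now apply log2_pos.
  assert (Hlog : log2 c2 + log2 lam < INR r * (INR B + 1)).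
  { apply log2_lt_of_lt_pow2 in Hdepth; [|nra].
    unfold log2 in *; rewrite ln_mult in Hdepth by lra.
    rewrite mult_INR, plus_INR in Hdepth; simpl (INR 1) in Hdepth; lra. }
  assert (HBR : 1 <= INR B) by (apply (le_INR 1); lia).
  apply le_INR in HBm; rewrite !mult_INR in HBm; simpl (INR 2) in HBm.
  pose proof (Rle_abs (- log2 c2)) as Habs; rewrite Rabs_Ropp in Habs.
  pose proof (pos_INR m); pose proof (pos_INR r); pose proof (pos_INR n).
  pose proof (Rabs_pos (log2 c2)).
  assert (Hlb : log2 lam <= (2 * INR r + Rabs (log2 c2)) * INR B).
  { assert (INR r <= INR r * INR B) by nra.
    assert (Rabs (log2 c2) <= Rabs (log2 c2) * INR B) by nra; nra. }
  assert (Hmll : INR m * log2 lam <= INR m * ((2 * INR r + Rabs (log2 c2)) * INR B))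
    by (apply Rmult_le_compat_l; lra).
  apply Rmult_le_reg_r with (log2 lam); auto; field_simplify; [|lra].
  nra.
Qed.

Lemma formula_size_bound (n m B s sz P : nat) c1 eps K :
  (3 <= n)%nat -> 0 < c1 -> 0 <= eps -> INR s <= c1 * INR n ->
  (B * m <= 2 * s)%nat -> (1 <= B)%nat ->
  (sz <= (m + 1) * (2 * 2 ^ P + 1))%nat -> INR P <= 1 + eps * log2 (INR n) ->
  5 * (2 * c1 + 1) <= K ->
  INR sz <= K * Rpower (INR n) (1 + eps).
Proof.
  intros Hn Hc1 Heps Hs HBm HB Hsz HP HK.
  assert (Hn3 : 3 <= INR n) by (apply (le_INR 3) in Hn; simpl in Hn; lra).
  set (ne := Rpower (INR n) eps).
  assert (Hne : 0 < ne) by apply exp_pos.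
  rewrite Rpower_plus, Rpower_1 by lra; fold ne.
  assert (Hm : INR m <= 2 * c1 * INR n).
  { apply le_INR in HBm; rewrite !mult_INR in HBm; simpl (INR 2) in HBm.
    assert (1 <= INR B) by (apply (le_INR 1); lia); pose proof (pos_INR m); nra. }
  pose proof (pow2_le_Rpower (INR n) eps P ltac:(lra) HP) as H2P; fold ne in H2P.
  apply le_INR in Hsz; rewrite mult_INR, !plus_INR, mult_INR in Hsz; simpl (INR 1) in Hsz.
  simpl (INR 2) in Hsz.
  pose proof (pos_INR m); pose proof (pos_INR (2 ^ P)).
  assert (Hne1 : 1 <= ne).
  { unfold ne; rewrite <- (Rpower_O (INR n)) by lra; apply Rle_Rpower; lra. }
  apply Rle_trans with ((INR m + 1) * (4 * ne + 1)); [nra|].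
  apply Rle_trans with (5 * (2 * c1 + 1) * (INR n * ne)); [nra|].
  apply Rmult_le_compat_r; nra.
Qed.

Theorem theorem4 :
  forall c1 c2 eps : R, 0 < c1 -> 0 < c2 -> 0 < eps ->
  exists K : R,
    forall (n : nat), (3 <= n)%nat ->
    forall (C : circuit) (f : (nat -> bool) -> bool),
      circuit_wf n C ->
      INR (circuit_size C) <= c1 * INR n ->
      INR (circuit_depth C) <= c2 * log2 (INR n) ->
      circuit_computes C f ->
      exists (m : nat) (F : formula),
        formula_vars_ok n m F /\
        INR m <= K * INR n / log2 (log2 (INR n)) /\
        INR (formula_size F) <= K * Rpower (INR n) (1 + eps) /\
        nd_formula_computes F f.
Proof.
  intros c1 c2 eps Hc1 Hc2 Heps.
  destruct (exists_scale_width c2 eps Hc2 Heps) as [r [Hr1 Hr]].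
  set (K1 := 2 * c1 * (2 * INR r + Rabs (log2 c2))).
  set (K2 := 5 * (2 * c1 + 1)).
  assert (0 <= K1) by (pose proof (pos_INR r); pose proof (Rabs_pos (log2 c2)); unfold K1; nra).
  exists (K1 + K2); intros n Hn C f Hwf Hs Hd Hcomp.
  assert (Hlam : 1 < log2 (INR n)) by now apply log2_INR_gt_1.
  destruct (exists_scale_count (c2 * log2 (INR n)) r Hr1 ltac:(nra)) as (B & HB & Hlow & Hhigh).
  destruct (nd_formula_few_guesses n C f r B (circuit_depth C) Hwf Hcomp (le_n _) HB)
    as (m & F & Hvars & Hcomputes & Hm & Hsize).
  exists m, F; split; [exact Hvars|split; [|split; [|exact Hcomputes]]].
  - apply (guesses_bound n m B r (circuit_size C) c1 c2); auto; fold K1; unfold K2; lra.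
  - apply (formula_size_bound n m B (circuit_size C) _
             (2 ^ (r * (B - 1)) + circuit_depth C / 2 ^ r) c1 eps); auto; [lra| |unfold K2; lra].
    apply (scale_exponent_bound r B _ c2); auto; lra.
Qed.
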